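(* Let $d=\mu_+-\mu_-$. For every $\epsilon\in[0,d/2]$ and every $K\in(1,B_K(\epsilon)]$, where $B_K(\epsilon)=\min\{\exp((d-2\epsilon)^2/2),\ d/\epsilon-1\}$ ($d/\epsilon:=+\infty$ if $\epsilon=0$), $$\mathbb E\big[|X-\theta^{(\epsilon)}_{\mathrm r}|\big]\;\ge\;\mathbb E\big[|X-\theta^*|\big]\;\ge\;\mathbb E\big[|X-\theta_{\mathrm f}|\big].$$ Moreover, $\theta_{\mathrm f}=\operatorname{argmin}_{\theta\in[\mu_-,\mu_+]}\mathbb E\big[|X-\theta|\big]$, i.e. the fair threshold minimizes the average distance to the decision boundary over all thresholds in $[\mu_-,\mu_+]$.
   Context: Setting (one-dimensional Gaussian mixture). Fix real numbers $\mu_-<\mu_+$ and $K>1$, and let $d=\mu_+-\mu_-$. Let $(X,Y)$ be a random pair with $\Pr(Y=1)=\Pr(Y=-1)=\tfrac12$, $X\mid Y=-1\sim\mathcal N(\mu_-,1)$, and $X\mid Y=1\sim\mathcal N(\mu_+,K^2)$; expectations are over this joint distribution. For $\theta\in\mathbb R$, $f_\theta(x)=1$ if $x>\theta$ and $f_\theta(x)=-1$ otherwise; the distance of $X$ to the decision boundary of $f_\theta$ is $|X-\theta|$. Class-conditional errors: $e_+(\theta)=\Pr(X\le\theta\mid Y=1)$, $e_-(\theta)=\Pr(X>\theta\mid Y=-1)$. Natural error: $R_{\mathrm{nat}}(\theta)=\tfrac12 e_+(\theta)+\tfrac12 e_-(\theta)$. For $\epsilon\ge0$, robust error: $R_{\mathrm{rob}}^{\epsilon}(\theta)=\tfrac12\Pr(X\le\theta+\epsilon\mid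 Y=1)+\tfrac12\Pr(X>\theta-\epsilon\mid Y=-1)$. Optimal models: $\theta^*$ minimizes $R_{\mathrm{nat}}$ over $[\mu_-,\mu_+]$; $\theta_{\mathrm f}$ is the threshold in $[\mu_-,\mu_+]$ with $e_+(\theta_{\mathrm f})=e_-(\theta_{\mathrm f})$; $\theta^{(\epsilon)}_{\mathrm r}$ minimizes $R^{\epsilon}_{\mathrm{rob}}$ over $[\mu_-,\mu_+]$. *)

From Stdlib Require Import Reals.
From Coquelicot Require Import Coquelicot.
Open Scope R_scope.

Definition gauss_pdf (m s x : R) : R :=
  exp (- (x - m) ^ 2 / (2 * s ^ 2)) / (s * sqrt (2 * PI)).

Definition pdf_neg (mu_m : R) (x : R) : R := gauss_pdf mu_m 1 x.
Definition pdf_pos (mu_p K : R) (x : R) : R := gauss_pdf mu_p K x.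

Definition prob_pos_le (mu_p K t : R) : R :=
  RInt_gen (pdf_pos mu_p K) (Rbar_locally m_infty) (at_point t).
Definition prob_neg_gt (mu_m t : R) : R :=
  RInt_gen (pdf_neg mu_m) (at_point t) (Rbar_locally p_infty).

Definition e_pos (mu_p K theta : R) : R := prob_pos_le mu_p K theta.
Definition e_neg (mu_m theta : R) : R := prob_neg_gt mu_m theta.

Definition R_nat (mu_m mu_p K theta : R) : R :=
  / 2 * e_pos mu_p K theta + / 2 * e_neg mu_m theta.

Definition R_rob (mu_m mu_p K eps theta : R) : R :=
  / 2 * prob_pos_le mu_p K (theta + eps) + / 2 * prob_neg_gt mu_m (theta - eps).

(* E[g(X)] under the joint distribution (Pr(Y = +-1) = 1/2). *)
Definition expect (mu_m mu_p K : R) (g : R -> R) : R :=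
  / 2 * RInt_gen (fun x => g x * pdf_neg mu_m x)
          (Rbar_locally m_infty) (Rbar_locally p_infty)
  + / 2 * RInt_gen (fun x => g x * pdf_pos mu_p K x)
          (Rbar_locally m_infty) (Rbar_locally p_infty).

Definition avg_dist (mu_m mu_p K theta : R) : R :=
  expect mu_m mu_p K (fun x => Rabs (x - theta)).

Definition is_min_on (F : R -> R) (a b theta : R) : Prop :=
  a <= theta <= b /\ forall t, a <= t <= b -> F theta <= F t.

(* Both class-conditional tails are values of the standard normal cdf Phi, so the
   fairness condition e_+ = e_- is an affine equation with solution
   theta_f = (K mu_- + mu_+) / (1 + K).  The average distance E|X - t| is convex in t,
   with subgradient (Phi_gap (t - mu_-) + Phi_gap ((t - mu_+) / K)) / 2 where
   Phi_gap z = Phi z - Phi (-z); it is increasing and vanishes at theta_f, so theta_f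
   is the unique minimizer and E|X - t| is nondecreasing to its right.
   The natural risk has derivative (density_+ - density_-) / 2, whose sign is that of
   the convex quadratic log-likelihood ratio; its minimizer on [mu_-, mu_+] is the root
   of that quadratic, and the robust risk is the natural risk with both means moved
   inwards by eps.  Under the bounds on K the ratio is -ln K < 0 at theta_f, and moving
   the means inwards lowers it to the right of theta_f, whence
   theta_f < theta* <= theta_r. *)

From Stdlib Require Import Reals Lra Psatz Classical.
From Coquelicot Require Import Coquelicot.
Open Scope R_scope.

Definition lim_pinf (F : R -> R) (L : R) :=
  forall eps, 0 < eps -> exists M, forall x, M < x -> Rabs (F x - L) < eps.
Definition lim_minf (F : R -> R) (L : R) :=
  forall eps, 0 < eps -> exists M, forall x, x < M -> Rabs (F x - L) < eps.

Lemma is_RInt_gen_pinf_lim f c L : (forall b, ex_RInt f c b) ->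
  (is_RInt_gen f (at_point c) (Rbar_locally p_infty) L <->
   lim_pinf (fun b => RInt f c b) L).
Proof.
  intros Hex; split.
  - intros Hg eps Heps.
    destruct (Hg (ball L (mkposreal eps Heps))) as [Q P HQ [M HM] HP].
    { now exists (mkposreal eps Heps). }
    exists M; intros x Hx.
    destruct (HP c x HQ (HM x Hx)) as [y [Hy Hb]]; simpl in Hy.
    now rewrite (is_RInt_unique _ _ _ _ Hy).
  - intros Hl P [eps HP].
    destruct (Hl eps (cond_pos eps)) as [M HM].
    apply Filter_prod with (fun a => a = c) (fun b => M < b).
    + reflexivity.
    + now exists M.
    + intros a b -> Hb; exists (RInt f c b).
      split; [now apply RInt_correct | apply HP, HM, Hb].
Qed.

Lemma is_RInt_gen_minf_lim f c L : (forall a, ex_RInt f a c) ->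
  (is_RInt_gen f (Rbar_locally m_infty) (at_point c) L <->
   lim_minf (fun a => RInt f a c) L).
Proof.
  intros Hex; split.
  - intros Hg eps Heps.
    destruct (Hg (ball L (mkposreal eps Heps))) as [Q P [M HM] HP HQP].
    { now exists (mkposreal eps Heps). }
    exists M; intros x Hx.
    destruct (HQP x c (HM x Hx) HP) as [y [Hy Hb]]; simpl in Hy.
    now rewrite (is_RInt_unique _ _ _ _ Hy).
  - intros Hl P [eps HP].
    destruct (Hl eps (cond_pos eps)) as [M HM].
    apply Filter_prod with (fun a => a < M) (fun b => b = c).
    + now exists M.
    + reflexivity.
    + intros a b Ha ->; exists (RInt f a c).
      split; [now apply RInt_correct | apply HP, HM, Ha].
Qed.

Lemma nondecreasing_bounded_lim_pinf F B : (forall x y, x <= y -> F x <= F y) ->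
  (forall x, F x <= B) -> exists L, lim_pinf F L.
Proof.
  intros Hm HB.
  destruct (completeness (fun r => exists x, r = F x)) as [m [Hub Hlub]].
  - exists B; intros r [x ->]; apply HB.
  - now exists (F 0), 0.
  - exists m; intros eps Heps.
    destruct (classic (exists x, m - eps < F x)) as [[x0 Hx0]|Hn].
    + exists x0; intros x Hx.
      assert (F x0 <= F x) by (apply Hm; lra).
      assert (F x <= m) by (apply Hub; now exists x).
      apply Rabs_def1; lra.
    + assert (m <= m - eps); [|lra].
      apply Hlub; intros r [x ->].
      apply Rnot_lt_le; intro H; apply Hn; now exists x.
Qed.

Lemma nonincreasing_bounded_lim_minf F B : (forall x y, x <= y -> F y <= F x) ->
  (forall x, F x <= B) -> exists L, lim_minf F L.
Proof.
  intros Hm HB.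
  destruct (nondecreasing_bounded_lim_pinf (fun x => F (- x)) B) as [L HL].
  - intros x y H; apply Hm; lra.
  - intros; apply HB.
  - exists L; intros eps Heps; destruct (HL eps Heps) as [M HM].
    exists (- M); intros x Hx.
    replace x with (- - x) by ring; apply HM; lra.
Qed.

Definition finite_mass (f : R -> R) :=
  (forall x, continuous f x) /\ (forall x, 0 <= f x) /\
  exists B, forall a b, a <= b -> RInt f a b <= B.

Definition lower_tail (f : R -> R) (c : R) : R :=
  RInt_gen f (Rbar_locally m_infty) (at_point c).
Definition upper_tail (f : R -> R) (c : R) : R :=
  RInt_gen f (at_point c) (Rbar_locally p_infty).

Section FiniteMass.
Variable f : R -> R.
Hypothesis Hf : finite_mass f.

Lemma finite_mass_ex_RInt a b : ex_RInt f a b.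
Proof.
  destruct Hf as [Hc _].
  now apply (ex_RInt_continuous (V := R_CompleteNormedModule)).
Qed.

Lemma finite_mass_Chasles a b c : RInt f a b + RInt f b c = RInt f a c.
Proof. apply (RInt_Chasles f); apply finite_mass_ex_RInt. Qed.

Lemma finite_mass_RInt_ge0 a b : a <= b -> 0 <= RInt f a b.
Proof.
  destruct Hf as [_ [Hp _]].
  intros; apply RInt_ge_0; auto using finite_mass_ex_RInt.
Qed.

Lemma finite_mass_RInt_le0 a b : b <= a -> RInt f a b <= 0.
Proof.
  intros Hba.
  rewrite <- (opp_RInt_swap f) by apply finite_mass_ex_RInt.
  assert (0 <= RInt f b a) by now apply finite_mass_RInt_ge0.
  change (- RInt f b a <= 0); lra.
Qed.

Lemma finite_mass_RInt_bounded : exists B, forall a b, RInt f a b <= B.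
Proof.
  destruct Hf as [_ [_ [B HB]]].
  exists (Rmax B 0); intros a b.
  destruct (Rle_dec a b) as [Hab|Hab].
  - apply Rle_trans with B; [now apply HB | apply Rmax_l].
  - apply Rle_trans with 0; [apply finite_mass_RInt_le0; lra | apply Rmax_r].
Qed.

Lemma is_RInt_gen_upper_tail c :
  is_RInt_gen f (at_point c) (Rbar_locally p_infty) (upper_tail f c).
Proof.
  destruct finite_mass_RInt_bounded as [B HB].
  destruct (nondecreasing_bounded_lim_pinf (fun b => RInt f c b) B) as [L HL];
    [| intros; apply HB |].
  - intros x y Hxy; rewrite <- (finite_mass_Chasles c x y).
    assert (0 <= RInt f x y) by now apply finite_mass_RInt_ge0. lra.
  - apply is_RInt_gen_pinf_lim in HL; [|intros; apply finite_mass_ex_RInt].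
    unfold upper_tail; now rewrite (is_RInt_gen_unique _ _ HL).
Qed.

Lemma is_RInt_gen_lower_tail c :
  is_RInt_gen f (Rbar_locally m_infty) (at_point c) (lower_tail f c).
Proof.
  destruct finite_mass_RInt_bounded as [B HB].
  destruct (nonincreasing_bounded_lim_minf (fun a => RInt f a c) B) as [L HL];
    [| intros; apply HB |].
  - intros x y Hxy; rewrite <- (finite_mass_Chasles x y c).
    assert (0 <= RInt f x y) by now apply finite_mass_RInt_ge0. lra.
  - apply is_RInt_gen_minf_lim in HL; [|intros; apply finite_mass_ex_RInt].
    unfold lower_tail; now rewrite (is_RInt_gen_unique _ _ HL).
Qed.

Lemma RInt_gen_split_tails c :
  RInt_gen f (Rbar_locally m_infty) (Rbar_locally p_infty) = lower_tail f c + upper_tail f c.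
Proof.
  apply is_RInt_gen_unique.
  exact (is_RInt_gen_Chasles f c _ _ (is_RInt_gen_lower_tail c) (is_RInt_gen_upper_tail c)).
Qed.

Lemma is_RInt_gen_segment s t : is_RInt_gen f (at_point s) (at_point t) (RInt f s t).
Proof.
  apply is_RInt_gen_at_point, (RInt_correct (V := R_CompleteNormedModule)).
  apply finite_mass_ex_RInt.
Qed.

Lemma lower_tail_Chasles s t : lower_tail f t = lower_tail f s + RInt f s t.
Proof.
  apply is_RInt_gen_unique.
  exact (is_RInt_gen_Chasles f s _ _ (is_RInt_gen_lower_tail s) (is_RInt_gen_segment s t)).
Qed.

Lemma upper_tail_Chasles s t : upper_tail f s = RInt f s t + upper_tail f t.
Proof.
  apply is_RInt_gen_unique.
  exact (is_RInt_gen_Chasles f t _ _ (is_RInt_gen_segment s t) (is_RInt_gen_upper_tail t)).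
Qed.
End FiniteMass.

Lemma is_RInt_gen_le (Fa Fb : (R -> Prop) -> Prop) (FFa : ProperFilter Fa)
  (FFb : ProperFilter Fb) (f g : R -> R) (lf lg : R) :
  filter_prod Fa Fb (fun ab => fst ab <= snd ab) ->
  filter_prod Fa Fb (fun ab => forall x, fst ab <= x <= snd ab -> f x <= g x) ->
  is_RInt_gen f Fa Fb lf -> is_RInt_gen g Fa Fb lg -> lf <= lg.
Proof.
  intros Hab Hfg Hf Hg.
  assert (H0 : is_RInt_gen (fun y => 0 * f y) Fa Fb (0 * lf))
    by exact (is_RInt_gen_scal f 0 lf Hf).
  assert (H1 : is_RInt_gen (fun y => g y - f y) Fa Fb (lg - lf))
    by exact (is_RInt_gen_minus g f lg lf Hg Hf).
  assert (Hfg' : filter_prod Fa Fb (fun ab => forall x, fst ab <= x <= snd ab ->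
      Rabs (0 * f x) <= g x - f x)).
  { eapply filter_imp; [|exact Hfg]. intros ab H x Hx. specialize (H x Hx).
    rewrite Rmult_0_l, Rabs_R0. lra. }
  assert (H := @RInt_gen_norm R_CompleteNormedModule Fa Fb FFa FFb _ _ _ _ Hab Hfg' H0 H1).
  change (Rabs (0 * lf) <= lg - lf) in H.
  rewrite Rmult_0_l, Rabs_R0 in H. lra.
Qed.

Lemma exp_ge_1_plus y : 1 + y <= exp y.
Proof.
  destruct (Req_dec y 0) as [->|Hn]; [rewrite exp_0; lra|].
  left; now apply exp_ineq1.
Qed.

Lemma gauss_kernel_cauchy_bound u :
  (1 + Rabs u) * exp (- (u ^ 2) / 2) <= 18 / (1 + u ^ 2).
Proof.
  set (w := Rabs u).
  assert (Hw : 0 <= w) by apply Rabs_pos.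
  assert (Hu2 : u ^ 2 = w ^ 2) by (unfold w; now rewrite <- !Rsqr_pow2, Rsqr_abs).
  rewrite Hu2.
  (* [exp (w^2/2) >= (1 + w^2/4)^2] dominates the cubic [(1 + w) (1 + w^2)] *)
  assert (H1 : 1 + w ^ 2 / 4 <= exp (w ^ 2 / 4)) by apply exp_ge_1_plus.
  assert (H2 : (1 + w ^ 2 / 4) * (1 + w ^ 2 / 4) <= exp (w ^ 2 / 2)).
  { replace (w ^ 2 / 2) with (w ^ 2 / 4 + w ^ 2 / 4) by field.
    rewrite exp_plus; apply Rmult_le_compat; nra. }
  replace (- (w ^ 2) / 2) with (- (w ^ 2 / 2)) by field.
  rewrite exp_Ropp.
  set (E := exp (w ^ 2 / 2)) in *.
  assert (HE : 0 < E) by apply exp_pos.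
  apply Rmult_le_reg_r with (E * (1 + w ^ 2)); [nra|].
  replace ((1 + w) * / E * (E * (1 + w ^ 2))) with ((1 + w) * (1 + w ^ 2)) by (field; lra).
  replace (18 / (1 + w ^ 2) * (E * (1 + w ^ 2))) with (18 * E) by (field; nra).
  nra.
Qed.

Lemma sqrt_2PI_pos : 0 < sqrt (2 * PI).
Proof. apply sqrt_lt_R0; generalize PI_RGT_0; lra. Qed.

Lemma gauss_pdf_std m s x : 0 < s ->
  gauss_pdf m s x = exp (- (((x - m) / s) ^ 2) / 2) / (s * sqrt (2 * PI)).
Proof. intros Hs; unfold gauss_pdf; do 2 f_equal; field; lra. Qed.

Lemma gauss_pdf_pos m s x : 0 < s -> 0 < gauss_pdf m s x.
Proof.
  intros Hs; unfold gauss_pdf; apply Rdiv_lt_0_compat; [apply exp_pos|].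
  apply Rmult_lt_0_compat; auto using sqrt_2PI_pos.
Qed.

Lemma gauss_pdf_continuous m s x : 0 < s -> continuous (gauss_pdf m s) x.
Proof.
  intros Hs; apply (ex_derive_continuous (V := R_NormedModule)).
  unfold gauss_pdf; auto_derive.
  assert (0 < s * sqrt (2 * PI)) by (apply Rmult_lt_0_compat; auto using sqrt_2PI_pos).
  lra.
Qed.

Lemma gauss_pdf_weighted_le v W m s x : 0 < s -> 0 <= W ->
  v <= W * (1 + Rabs ((x - m) / s)) ->
  v * gauss_pdf m s x <= 18 * W / (s * sqrt (2 * PI)) / (1 + ((x - m) / s) ^ 2).
Proof.
  intros Hs HW Hv; rewrite gauss_pdf_std by lra.
  set (u := (x - m) / s) in *.
  assert (Hc := gauss_kernel_cauchy_bound u).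
  assert (HE : 0 < exp (- (u ^ 2) / 2)) by apply exp_pos.
  assert (Hq : 0 < s * sqrt (2 * PI)) by (apply Rmult_lt_0_compat; auto using sqrt_2PI_pos).
  assert (Hp : 0 < 1 + u ^ 2) by (generalize (pow2_ge_0 u); lra).
  apply Rle_trans with (W * ((1 + Rabs u) * exp (- (u ^ 2) / 2)) / (s * sqrt (2 * PI))).
  - unfold Rdiv; rewrite <- Rmult_assoc; apply Rmult_le_compat_r; [left; now apply Rinv_0_lt_compat|].
    rewrite <- Rmult_assoc; apply Rmult_le_compat_r; lra.
  - apply Rle_trans with (W * (18 / (1 + u ^ 2)) / (s * sqrt (2 * PI))).
    + unfold Rdiv; apply Rmult_le_compat_r; [left; now apply Rinv_0_lt_compat|].
      now apply Rmult_le_compat_l.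
    + right; field; generalize sqrt_2PI_pos; repeat split; lra.
Qed.

Lemma finite_mass_of_cauchy_bound f C m s : 0 < s ->
  (forall x, continuous f x) -> (forall x, 0 <= f x) ->
  (forall x, f x <= C / (1 + ((x - m) / s) ^ 2)) -> finite_mass f.
Proof.
  intros Hs Hc Hp Hb.
  assert (HC : 0 <= C).
  { specialize (Hb m); specialize (Hp m).
    replace ((m - m) / s) with 0 in Hb by (field; lra). rewrite pow_i, Rplus_0_r, Rdiv_1_r in Hb by lia. lra. }
  split; [exact Hc|split; [exact Hp|]].
  exists (C * (s * PI)); intros a b Hab.
  assert (Hi : is_RInt (fun x => C / (1 + ((x - m) / s) ^ 2)) a b
     (C * (s * atan ((b - m) / s)) - C * (s * atan ((a - m) / s)))).
  { apply (is_RInt_derive (fun x => C * (s * atan ((x - m) / s)))).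
    - intros x _; auto_derive; [exact I|].
      assert (0 < 1 + ((x - m) / s) ^ 2) by (generalize (pow2_ge_0 ((x - m) / s)); lra).
      field; split; [lra|].
      assert (0 < s ^ 2) by (apply pow_lt; lra). generalize (pow2_ge_0 (x - m)); lra.
    - intros x _; apply (ex_derive_continuous (V := R_NormedModule)); auto_derive.
      generalize (pow2_ge_0 ((x - m) / s)); simpl; lra. }
  apply Rle_trans with (RInt (fun x => C / (1 + ((x - m) / s) ^ 2)) a b).
  - apply RInt_le; auto.
    + now apply (ex_RInt_continuous (V := R_CompleteNormedModule)).
    + eexists; eauto.
  - rewrite (is_RInt_unique _ _ _ _ Hi).
    destruct (atan_bound ((b - m) / s)), (atan_bound ((a - m) / s)).
    replace (C * (s * atan ((b - m) / s)) - C * (s * atan ((a - m) / s)))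
      with (C * (s * (atan ((b - m) / s) - atan ((a - m) / s)))) by ring.
    apply Rmult_le_compat_l, Rmult_le_compat_l; lra.
Qed.

Lemma finite_mass_gauss_pdf m s : 0 < s -> finite_mass (gauss_pdf m s).
Proof.
  intros Hs.
  apply (finite_mass_of_cauchy_bound _ (18 * 1 / (s * sqrt (2 * PI))) m s); auto.
  - intros; now apply gauss_pdf_continuous.
  - intros; left; now apply gauss_pdf_pos.
  - intros x; rewrite <- (Rmult_1_l (gauss_pdf m s x)).
    apply gauss_pdf_weighted_le; auto; [lra|].
    generalize (Rabs_pos ((x - m) / s)); lra.
Qed.

Lemma finite_mass_abs_gauss_pdf m s t : 0 < s ->
  finite_mass (fun x => Rabs (x - t) * gauss_pdf m s x).
Proof.
  intros Hs.
  assert (Hc : forall x, continuous (fun x => Rabs (x - t) * gauss_pdf m s x) x).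
  { intros x; apply (continuous_mult (fun x => Rabs (x - t)) (gauss_pdf m s));
      [|now apply gauss_pdf_continuous].
    apply continuous_Rabs_comp, (ex_derive_continuous (V := R_NormedModule)).
    auto_derive; exact I. }
  apply (finite_mass_of_cauchy_bound _ (18 * (s + Rabs (m - t)) / (s * sqrt (2 * PI))) m s);
    auto.
  - intros x; apply Rmult_le_pos; [apply Rabs_pos | left; now apply gauss_pdf_pos].
  - intros x; apply gauss_pdf_weighted_le; auto.
    + generalize (Rabs_pos (m - t)); lra.
    + replace (x - t) with (s * ((x - m) / s) + (m - t)) by (field; lra).
      eapply Rle_trans; [apply Rabs_triang|].
      rewrite Rabs_mult, (Rabs_right s) by lra.
      generalize (Rabs_pos ((x - m) / s)) (Rabs_pos (m - t)); nra.
Qed.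

Definition phi : R -> R := gauss_pdf 0 1.
Definition Phi (z : R) : R := lower_tail phi z.

Lemma finite_mass_phi : finite_mass phi.
Proof. apply finite_mass_gauss_pdf; lra. Qed.

Lemma RInt_gauss_pdf_standardize m s a b : 0 < s ->
  RInt (gauss_pdf m s) a b = RInt phi ((a - m) / s) ((b - m) / s).
Proof.
  intros Hs.
  assert (H := RInt_comp_lin (gauss_pdf m s) s m ((a - m) / s) ((b - m) / s)
                (finite_mass_ex_RInt _ (finite_mass_gauss_pdf m s Hs) _ _)).
  replace (s * ((a - m) / s) + m) with a in H by (field; lra).
  replace (s * ((b - m) / s) + m) with b in H by (field; lra).
  rewrite <- H; apply RInt_ext; intros x _.
  change (s * gauss_pdf m s (s * x + m) = phi x).
  unfold phi, gauss_pdf.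
  replace (- (s * x + m - m) ^ 2 / (2 * s ^ 2)) with (- (x - 0) ^ 2 / (2 * 1 ^ 2))
    by (field; lra).
  field; generalize sqrt_2PI_pos; lra.
Qed.

Lemma RInt_phi_reflect a b : RInt phi a b = RInt phi (- b) (- a).
Proof.
  assert (Hex := finite_mass_ex_RInt _ finite_mass_phi).
  assert (H : RInt phi (- a) (- b) = - RInt phi a b).
  { replace (- a) with (-1 * a + 0) by ring; replace (- b) with (-1 * b + 0) by ring.
    rewrite <- (RInt_comp_lin phi (-1) 0 a b (Hex _ _)).
    assert (Eopp := RInt_opp phi a b (Hex a b)).
    change (RInt (fun x => - phi x) a b = - RInt phi a b) in Eopp.
    rewrite <- Eopp; apply RInt_ext; intros x _.
    change (-1 * phi (-1 * x + 0) = - phi x).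
    unfold phi, gauss_pdf.
    replace ((-1 * x + 0 - 0) ^ 2) with ((x - 0) ^ 2) by ring; ring. }
  rewrite <- (opp_RInt_swap phi (- b) (- a)) in H by apply Hex.
  change (- RInt phi (- b) (- a) = - RInt phi a b) in H; lra.
Qed.

Lemma lower_tail_gauss_pdf m s t : 0 < s ->
  lower_tail (gauss_pdf m s) t = Phi ((t - m) / s).
Proof.
  intros Hs; apply is_RInt_gen_unique.
  apply is_RInt_gen_minf_lim; [intros; apply (finite_mass_ex_RInt _ (finite_mass_gauss_pdf m s Hs))|].
  intros eps Heps.
  destruct ((proj1 (is_RInt_gen_minf_lim _ _ _ (fun a => finite_mass_ex_RInt _ finite_mass_phi a _)))
              (is_RInt_gen_lower_tail _ finite_mass_phi ((t - m) / s)) eps Heps) as [M HM].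
  exists (M * s + m); intros a Ha.
  rewrite RInt_gauss_pdf_standardize by exact Hs.
  apply HM; apply (Rmult_lt_reg_r s); [exact Hs|].
  unfold Rdiv; rewrite Rmult_assoc, Rinv_l; lra.
Qed.

Lemma upper_tail_gauss_pdf m s t : 0 < s ->
  upper_tail (gauss_pdf m s) t = Phi ((m - t) / s).
Proof.
  intros Hs; apply is_RInt_gen_unique.
  apply is_RInt_gen_pinf_lim; [intros; apply (finite_mass_ex_RInt _ (finite_mass_gauss_pdf m s Hs))|].
  intros eps Heps.
  destruct ((proj1 (is_RInt_gen_minf_lim _ _ _ (fun a => finite_mass_ex_RInt _ finite_mass_phi a _)))
              (is_RInt_gen_lower_tail _ finite_mass_phi ((m - t) / s)) eps Heps) as [M HM].
  exists (m - M * s); intros b Hb.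
  rewrite RInt_gauss_pdf_standardize, RInt_phi_reflect by exact Hs.
  replace (- ((b - m) / s)) with ((m - b) / s) by (field; lra).
  replace (- ((t - m) / s)) with ((m - t) / s) by (field; lra).
  apply HM; apply (Rmult_lt_reg_r s); [exact Hs|].
  unfold Rdiv; rewrite Rmult_assoc, Rinv_l; lra.
Qed.

Lemma Phi_increasing z1 z2 : z1 < z2 -> Phi z1 < Phi z2.
Proof.
  intros H; unfold Phi; rewrite (lower_tail_Chasles _ finite_mass_phi z1 z2).
  assert (0 < RInt phi z1 z2); [|lra].
  apply RInt_gt_0; auto.
  - intros; apply gauss_pdf_pos; lra.
  - intros; apply gauss_pdf_continuous; lra.
Qed.

Lemma Phi_inj z1 z2 : Phi z1 = Phi z2 -> z1 = z2.
Proof.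
  intros H; destruct (Rtotal_order z1 z2) as [h|[h|h]]; auto;
    apply Phi_increasing in h; lra.
Qed.

(* By symmetry of [phi], [Phi_gap] is the lower minus the upper tail of [phi], which
   spares us computing the total mass of the Gaussian density. *)
Definition Phi_gap (z : R) : R := Phi z - Phi (- z).

Lemma Phi_gap_increasing z1 z2 : z1 < z2 -> Phi_gap z1 < Phi_gap z2.
Proof.
  intros H; unfold Phi_gap.
  assert (Phi z1 < Phi z2) by now apply Phi_increasing.
  assert (Phi (- z2) < Phi (- z1)) by (apply Phi_increasing; lra). lra.
Qed.

Lemma Phi_gap_opp z : Phi_gap (- z) = - Phi_gap z.
Proof. unfold Phi_gap; rewrite Ropp_involutive; ring. Qed.

Lemma tail_gap_gauss_pdf m s r : 0 < s ->
  lower_tail (gauss_pdf m s) r - upper_tail (gauss_pdf m s) r = Phi_gap ((r - m) / s).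
Proof.
  intros Hs; rewrite lower_tail_gauss_pdf, upper_tail_gauss_pdf by exact Hs.
  unfold Phi_gap; do 3 f_equal; field; lra.
Qed.

Lemma Rabs_sub_sub_ge_left x t r : x <= r -> t - r <= Rabs (x - t) - Rabs (x - r).
Proof.
  intros H; rewrite (Rabs_left1 (x - r)) by lra.
  assert (- (x - t) <= Rabs (x - t)) by (rewrite <- Rabs_Ropp; apply Rle_abs). lra.
Qed.

Lemma Rabs_sub_sub_ge_right x t r : r <= x -> r - t <= Rabs (x - t) - Rabs (x - r).
Proof.
  intros H; rewrite (Rabs_pos_eq (x - r)) by lra.
  assert (x - t <= Rabs (x - t)) by apply Rle_abs. lra.
Qed.

Lemma abs_moment_subgradient g t r : finite_mass g ->
  finite_mass (fun x => Rabs (x - t) * g x) -> finite_mass (fun x => Rabs (x - r) * g x) ->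
  RInt_gen (fun x => Rabs (x - t) * g x) (Rbar_locally m_infty) (Rbar_locally p_infty)
  - RInt_gen (fun x => Rabs (x - r) * g x) (Rbar_locally m_infty) (Rbar_locally p_infty)
  >= (t - r) * (lower_tail g r - upper_tail g r).
Proof.
  intros Hg Ht Hr.
  set (ht := fun x => Rabs (x - t) * g x) in *.
  set (hr := fun x => Rabs (x - r) * g x) in *.
  rewrite (RInt_gen_split_tails _ Ht r), (RInt_gen_split_tails _ Hr r).
  assert (Hgp : forall x, 0 <= g x) by apply Hg.
  assert (HL : (t - r) * lower_tail g r <= lower_tail ht r - lower_tail hr r).
  { apply (is_RInt_gen_le (Rbar_locally m_infty) (at_point r) _ _
             (fun x => (t - r) * g x) (fun x => ht x - hr x)).
    - apply Filter_prod with (fun a => a < r) (fun b => b = r);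
        [now exists r | reflexivity | intros a b Ha ->; simpl; lra].
    - apply Filter_prod with (fun a => a < r) (fun b => b = r);
        [now exists r | reflexivity |].
      intros a b Ha -> x Hx; unfold ht, hr.
      assert (H := Rabs_sub_sub_ge_left x t r (proj2 Hx)). specialize (Hgp x). nra.
    - exact (is_RInt_gen_scal g (t - r) _ (is_RInt_gen_lower_tail _ Hg r)).
    - exact (is_RInt_gen_minus ht hr _ _ (is_RInt_gen_lower_tail _ Ht r)
               (is_RInt_gen_lower_tail _ Hr r)). }
  assert (HR : (r - t) * upper_tail g r <= upper_tail ht r - upper_tail hr r).
  { apply (is_RInt_gen_le (at_point r) (Rbar_locally p_infty) _ _
             (fun x => (r - t) * g x) (fun x => ht x - hr x)).
    - apply Filter_prod with (fun a => a = r) (fun b => r < b);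
        [reflexivity | now exists r | intros a b -> Hb; simpl; lra].
    - apply Filter_prod with (fun a => a = r) (fun b => r < b);
        [reflexivity | now exists r |].
      intros a b -> Hb x Hx; unfold ht, hr.
      assert (H := Rabs_sub_sub_ge_right x t r (proj1 Hx)). specialize (Hgp x). nra.
    - exact (is_RInt_gen_scal g (r - t) _ (is_RInt_gen_upper_tail _ Hg r)).
    - exact (is_RInt_gen_minus ht hr _ _ (is_RInt_gen_upper_tail _ Ht r)
               (is_RInt_gen_upper_tail _ Hr r)). }
  lra.
Qed.

Definition avg_dist_slope (mm mp K r : R) : R :=
  / 2 * (Phi_gap (r - mm) + Phi_gap ((r - mp) / K)).

Lemma avg_dist_subgradient mm mp K t r : 0 < K ->
  avg_dist mm mp K t - avg_dist mm mp K r >= (t - r) * avg_dist_slope mm mp K r.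
Proof.
  intros HK.
  assert (Hneg := abs_moment_subgradient (gauss_pdf mm 1) t r
    (finite_mass_gauss_pdf mm 1 Rlt_0_1) (finite_mass_abs_gauss_pdf mm 1 t Rlt_0_1)
    (finite_mass_abs_gauss_pdf mm 1 r Rlt_0_1)).
  assert (Hpos := abs_moment_subgradient (gauss_pdf mp K) t r (finite_mass_gauss_pdf mp K HK)
    (finite_mass_abs_gauss_pdf mp K t HK) (finite_mass_abs_gauss_pdf mp K r HK)).
  rewrite tail_gap_gauss_pdf, Rdiv_1_r in Hneg by exact Rlt_0_1.
  rewrite tail_gap_gauss_pdf in Hpos by exact HK.
  unfold avg_dist, expect, avg_dist_slope, pdf_neg, pdf_pos. nra.
Qed.

Lemma avg_dist_slope_increasing mm mp K r1 r2 : 0 < K -> r1 < r2 ->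
  avg_dist_slope mm mp K r1 < avg_dist_slope mm mp K r2.
Proof.
  intros HK H; unfold avg_dist_slope.
  assert (Phi_gap (r1 - mm) < Phi_gap (r2 - mm)) by (apply Phi_gap_increasing; lra).
  assert (Phi_gap ((r1 - mp) / K) < Phi_gap ((r2 - mp) / K)).
  { apply Phi_gap_increasing, Rmult_lt_compat_r; [apply Rinv_0_lt_compat|]; lra. }
  lra.
Qed.

Lemma avg_dist_slope_fair mm mp K : 0 < K ->
  avg_dist_slope mm mp K ((K * mm + mp) / (1 + K)) = 0.
Proof.
  intros HK; unfold avg_dist_slope.
  replace ((K * mm + mp) / (1 + K) - mm) with (- (((K * mm + mp) / (1 + K) - mp) / K))
    by (field; lra).
  rewrite Phi_gap_opp; ring.
Qed.

Section Subgradient.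
Variables (A S : R -> R) (c : R).
Hypothesis subgradient : forall t r, A t - A r >= (t - r) * S r.
Hypothesis S_increasing : forall r1 r2, r1 < r2 -> S r1 < S r2.
Hypothesis S_root : S c = 0.

Lemma subgradient_min t : A c <= A t.
Proof. specialize (subgradient t c); rewrite S_root in subgradient; lra. Qed.

Lemma subgradient_min_unique t : A t <= A c -> t = c.
Proof.
  intros Hle; apply NNPP; intros Hne.
  (* the midpoint [m] lies strictly between [c] and [t], so [A t > A m >= A c] *)
  set (m := (t + c) / 2).
  assert (H := subgradient t m).
  assert (H2 := subgradient_min m).
  assert (0 < (t - m) * S m); [|lra].
  destruct (Rtotal_order t c) as [h|[h|h]]; [| contradiction |].
  - assert (S m < 0) by (rewrite <- S_root; apply S_increasing; unfold m; lra).
    assert (t - m < 0) by (unfold m; lra). nra.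
  - assert (0 < S m) by (rewrite <- S_root; apply S_increasing; unfold m; lra).
    assert (0 < t - m) by (unfold m; lra). nra.
Qed.

Lemma subgradient_le s t : c < s -> s <= t -> A s <= A t.
Proof.
  intros Hcs Hst.
  assert (HS : 0 < S s) by (rewrite <- S_root; now apply S_increasing).
  assert (Hsub := subgradient t s). nra.
Qed.
End Subgradient.

Lemma prob_pos_le_Phi mp K t : 0 < K -> prob_pos_le mp K t = Phi ((t - mp) / K).
Proof. exact (lower_tail_gauss_pdf mp K t). Qed.

Lemma prob_neg_gt_Phi mm t : prob_neg_gt mm t = Phi (mm - t).
Proof. rewrite <- (Rdiv_1_r (mm - t)); exact (upper_tail_gauss_pdf mm 1 t Rlt_0_1). Qed.

Lemma fair_threshold_eq mm mp K theta : 0 < K ->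
  e_pos mp K theta = e_neg mm theta -> theta = (K * mm + mp) / (1 + K).
Proof.
  intros HK H; unfold e_pos, e_neg in H.
  rewrite prob_pos_le_Phi, prob_neg_gt_Phi in H by exact HK.
  apply Phi_inj in H.
  assert (E : theta - mp = K * (mm - theta)) by (rewrite <- H; field; lra).
  apply (Rmult_eq_reg_r (1 + K)); [|lra].
  unfold Rdiv; rewrite Rmult_assoc, Rinv_l by lra; lra.
Qed.

Lemma R_rob_eq_R_nat mm mp K eps theta : 0 < K ->
  R_rob mm mp K eps theta = R_nat (mm + eps) (mp - eps) K theta.
Proof.
  intros HK; unfold R_rob, R_nat, e_pos, e_neg.
  rewrite !prob_pos_le_Phi, !prob_neg_gt_Phi by exact HK.
  do 3 f_equal; [f_equal; field; lra | ring].
Qed.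

Lemma R_nat_increment mm mp K s t : 0 < K ->
  R_nat mm mp K t - R_nat mm mp K s =
  / 2 * RInt (gauss_pdf mp K) s t - / 2 * RInt (gauss_pdf mm 1) s t.
Proof.
  intros HK.
  change (/ 2 * lower_tail (gauss_pdf mp K) t + / 2 * upper_tail (gauss_pdf mm 1) t
        - (/ 2 * lower_tail (gauss_pdf mp K) s + / 2 * upper_tail (gauss_pdf mm 1) s)
        = / 2 * RInt (gauss_pdf mp K) s t - / 2 * RInt (gauss_pdf mm 1) s t).
  rewrite (lower_tail_Chasles _ (finite_mass_gauss_pdf mp K HK) s t).
  rewrite (upper_tail_Chasles _ (finite_mass_gauss_pdf mm 1 Rlt_0_1) s t).
  ring.
Qed.

Definition log_lr (mm mp K x : R) : R :=
  (x - mm) ^ 2 / 2 - (x - mp) ^ 2 / (2 * K ^ 2) - ln K.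

Lemma ln_gauss_pdf m s x : 0 < s ->
  ln (gauss_pdf m s x) = - (x - m) ^ 2 / (2 * s ^ 2) - ln s - ln (sqrt (2 * PI)).
Proof.
  intros Hs; generalize sqrt_2PI_pos; intros Hq.
  unfold gauss_pdf, Rdiv.
  rewrite ln_mult, ln_exp, ln_Rinv, ln_mult by (try apply exp_pos; try apply Rinv_0_lt_compat;
    try apply Rmult_lt_0_compat; auto).
  ring.
Qed.

Lemma log_lr_ln_ratio mm mp K x : 0 < K ->
  log_lr mm mp K x = ln (gauss_pdf mp K x) - ln (gauss_pdf mm 1 x).
Proof.
  intros HK; unfold log_lr; rewrite !ln_gauss_pdf, ln_1 by lra.
  field; lra.
Qed.

Lemma gauss_pdf_lt_of_log_lr_neg mm mp K x : 0 < K ->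
  log_lr mm mp K x < 0 -> gauss_pdf mp K x < gauss_pdf mm 1 x.
Proof.
  intros HK H; rewrite log_lr_ln_ratio in H by exact HK.
  apply ln_lt_inv; try apply gauss_pdf_pos; lra.
Qed.

Lemma gauss_pdf_lt_of_log_lr_pos mm mp K x : 0 < K ->
  0 < log_lr mm mp K x -> gauss_pdf mm 1 x < gauss_pdf mp K x.
Proof.
  intros HK H; rewrite log_lr_ln_ratio in H by exact HK.
  apply ln_lt_inv; try apply gauss_pdf_pos; lra.
Qed.

Lemma quadratic_sign_change al be ga a b : 0 < al -> a < b ->
  al * a ^ 2 + be * a + ga < 0 -> 0 <= al * b ^ 2 + be * b + ga ->
  exists c, a < c <= b /\ al * c ^ 2 + be * c + ga = 0 /\
    (forall x, a <= x < c -> al * x ^ 2 + be * x + ga < 0) /\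
    (forall x, c < x -> 0 < al * x ^ 2 + be * x + ga).
Proof.
  intros Hal Hab Ha Hb.
  set (q := fun x => al * x ^ 2 + be * x + ga) in *.
  assert (Hroot : exists c, a < c <= b /\ q c = 0).
  { destruct (Req_dec (q b) 0) as [E|E]; [exists b; split; [lra | exact E]|].
    assert (Hcont : continuity q).
    { apply continuity_plus; [apply continuity_plus | apply continuity_const; now intros ? ?].
      - apply continuity_scal, derivable_continuous, derivable_pow.
      - apply continuity_scal, derivable_continuous, derivable_id. }
    destruct (IVT q a b Hcont Hab Ha ltac:(unfold q in *; lra)) as [z [Hz1 Hz2]].
    exists z; split; [|exact Hz2].
    destruct (Req_dec z a) as [->|]; unfold q in *; lra. }
  destruct Hroot as [c [Hc Hc0]].
  assert (Hfac : forall x, q x = (x - c) * (al * (x + c) + be)).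
  { intros x; unfold q in *; replace ga with (- (al * c ^ 2 + be * c)) by lra; ring. }
  (* [q a < 0] with [a < c] makes the second factor positive at [a], hence from [a] on *)
  assert (Hk : forall x, a <= x -> 0 < al * (x + c) + be).
  { intros x Hx.
    assert (Ha' : (a - c) * (al * (a + c) + be) < 0) by (rewrite <- Hfac; exact Ha).
    assert (0 < al * (a + c) + be) by nra.
    assert (0 <= al * (x - a)) by (apply Rmult_le_pos; lra). lra. }
  exists c; split; [exact Hc | split; [exact Hc0 | split]].
  - intros x Hx; fold (q x); rewrite Hfac.
    assert (0 < (c - x) * (al * (x + c) + be)) by (apply Rmult_lt_0_compat; [lra | apply Hk; lra]).
    lra.
  - intros x Hx; fold (q x); rewrite Hfac.
    apply Rmult_lt_0_compat; [lra | apply Hk; lra].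
Qed.

Lemma is_min_on_valley (F : R -> R) a b c th : a <= c <= b ->
  (forall s t, a <= s -> s < t -> t <= c -> F t < F s) ->
  (forall s t, c <= s -> s < t -> t <= b -> F s < F t) ->
  is_min_on F a b th -> th = c.
Proof.
  intros Hc Hdec Hinc [Hth Hmin].
  destruct (Rtotal_order th c) as [h|[h|h]]; auto.
  - assert (F c < F th) by (apply Hdec; lra).
    assert (F th <= F c) by (apply Hmin; lra). lra.
  - assert (F c < F th) by (apply Hinc; lra).
    assert (F th <= F c) by (apply Hmin; lra). lra.
Qed.

Lemma is_min_on_ext (F G : R -> R) a b th : (forall x, F x = G x) ->
  is_min_on F a b th -> is_min_on G a b th.
Proof.
  intros E [Hth Hmin]; split; [exact Hth|].
  intros t Ht; rewrite <- !E; now apply Hmin.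
Qed.

(* [R_nat] has derivative [(gauss_pdf mp K - gauss_pdf mm 1) / 2], whose sign is that
   of the quadratic [log_lr]. *)
Lemma R_nat_minimizer mm mp K a b th : 1 < K -> a < b ->
  log_lr mm mp K a < 0 -> 0 <= log_lr mm mp K b ->
  is_min_on (R_nat mm mp K) a b th ->
  log_lr mm mp K th = 0 /\ (forall x, th < x -> 0 < log_lr mm mp K x).
Proof.
  intros HK Hab Ha Hb Hmin.
  assert (HK0 : 0 < K) by lra.
  assert (Hq : forall x, log_lr mm mp K x = (/ 2 - / (2 * K ^ 2)) * x ^ 2
            + (- mm + mp / K ^ 2) * x + (mm ^ 2 / 2 - mp ^ 2 / (2 * K ^ 2) - ln K))
    by (intros; unfold log_lr; field; lra).
  assert (Hal : 0 < / 2 - / (2 * K ^ 2)).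
  { assert (/ (2 * K ^ 2) < / 2); [apply Rinv_lt_contravar; nra | lra]. }
  rewrite !Hq in Ha, Hb.
  destruct (quadratic_sign_change _ _ _ a b Hal Hab Ha Hb) as [c [Hc [Hc0 [Hneg Hpos]]]].
  assert (Hcont : forall m s x, 0 < s -> continuous (gauss_pdf m s) x)
    by (intros; now apply gauss_pdf_continuous).
  assert (th = c) as ->.
  { apply (is_min_on_valley (R_nat mm mp K) a b); [lra | | | exact Hmin];
      intros s t Hs Hst Ht; assert (Hinc := R_nat_increment mm mp K s t HK0).
    - assert (RInt (gauss_pdf mp K) s t < RInt (gauss_pdf mm 1) s t); [|lra].
      apply RInt_lt; auto with real.
      intros x Hx; apply gauss_pdf_lt_of_log_lr_neg; [exact HK0|].
      rewrite Hq; apply Hneg; lra.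
    - assert (RInt (gauss_pdf mm 1) s t < RInt (gauss_pdf mp K) s t); [|lra].
      apply RInt_lt; auto with real.
      intros x Hx; apply gauss_pdf_lt_of_log_lr_pos; [exact HK0|].
      rewrite Hq; apply Hpos; lra. }
  split; [now rewrite Hq | intros x Hx; rewrite Hq; now apply Hpos].
Qed.

Lemma log_lr_fair mm mp K : 0 < K ->
  log_lr mm mp K ((K * mm + mp) / (1 + K)) = - ln K.
Proof. intros HK; unfold log_lr; field; lra. Qed.

Lemma log_lr_endpoints mm mp K eps : 1 < K -> 0 <= eps ->
  K * eps <= mp - mm - eps -> ln K <= (mp - mm - 2 * eps) ^ 2 / 2 ->
  log_lr (mm + eps) (mp - eps) K mm < 0 /\ 0 <= log_lr (mm + eps) (mp - eps) K mp.
Proof.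
  intros HK Heps HKeps HlnK.
  assert (HlnK0 : 0 < ln K) by (rewrite <- ln_1; apply ln_increasing; lra).
  assert (Hsq : forall u, u ^ 2 / (2 * K ^ 2) = (u / K) ^ 2 / 2) by (intros; field; lra).
  unfold log_lr; rewrite !Hsq; split.
  - assert (eps <= (mp - mm - eps) / K).
    { apply (Rmult_le_reg_r K); [lra|].
      replace ((mp - mm - eps) / K * K) with (mp - mm - eps) by (field; lra). lra. }
    replace ((mm - (mp - eps)) / K) with (- ((mp - mm - eps) / K)) by (field; lra).
    replace (mm - (mm + eps)) with (- eps) by ring. nra.
  - replace (mp - (mp - eps)) with eps by ring.
    assert (0 <= eps / K <= eps).
    { split; [apply Rdiv_le_0_compat; lra|].
      apply (Rmult_le_reg_r K); [lra|].
      replace (eps / K * K) with eps by (field; lra). nra. }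
    nra.
Qed.

Lemma log_lr_shift_le mm mp K eps x : 1 < K -> 0 <= eps ->
  K * eps <= mp - mm - eps -> (K * mm + mp) / (1 + K) <= x ->
  log_lr (mm + eps) (mp - eps) K x <= log_lr mm mp K x.
Proof.
  intros HK Heps HKeps Hx.
  set (y := x - mm); set (d := mp - mm).
  assert (Hyd : d <= y * (1 + K)).
  { unfold y, d; apply (Rmult_le_compat_r (1 + K)) in Hx; [|lra].
    replace ((K * mm + mp) / (1 + K) * (1 + K)) with (K * mm + mp) in Hx by (field; lra).
    lra. }
  assert (Id : 2 * K ^ 2 * (log_lr (mm + eps) (mp - eps) K x - log_lr mm mp K x) =
               eps * (K ^ 2 * eps - 2 * K ^ 2 * y + 2 * (d - y) - eps))
    by (unfold log_lr, y, d; field; lra).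
  assert (P1 : 0 <= (K - 1) * (d - eps * (K + 1))) by (apply Rmult_le_pos; unfold d; lra).
  assert (P2 : 0 <= (K + 1) * (y * (1 + K) - d)) by (apply Rmult_le_pos; lra).
  assert (Hy : 0 <= y).
  { assert (0 <= d) by (unfold d; nra).
    apply (Rmult_le_reg_r (1 + K)); lra. }
  assert (P3 : 0 <= y * (K - 1) ^ 2) by (apply Rmult_le_pos; [exact Hy | apply pow2_ge_0]).
  assert (eps * (K ^ 2 * eps - 2 * K ^ 2 * y + 2 * (d - y) - eps) <= 0).
  { assert (K ^ 2 * eps - 2 * K ^ 2 * y + 2 * (d - y) - eps <= 0) by nra. nra. }
  assert (log_lr (mm + eps) (mp - eps) K x - log_lr mm mp K x <= 0); [|lra].
  apply (Rmult_le_reg_l (2 * K ^ 2)); [nra | lra].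
Qed.

Lemma robust_radius_bound K d eps : 0 <= d -> 0 <= eps ->
  (eps = 0 \/ K <= d / eps - 1) -> K * eps <= d - eps.
Proof.
  intros Hd Heps [-> | H]; [lra|].
  destruct (Req_dec eps 0) as [-> | Hne]; [lra|].
  apply (Rmult_le_compat_r eps) in H; [|lra].
  replace ((d / eps - 1) * eps) with (d - eps) in H by (field; lra).
  lra.
Qed.

Lemma threshold_order mm mp K eps theta_star theta_r : 1 < K -> mm < mp -> 0 <= eps ->
  K * eps <= mp - mm - eps -> ln K <= (mp - mm - 2 * eps) ^ 2 / 2 ->
  is_min_on (R_nat mm mp K) mm mp theta_star ->
  is_min_on (R_rob mm mp K eps) mm mp theta_r ->
  (K * mm + mp) / (1 + K) < theta_star <= theta_r.
Proof.
  intros HK Hmu Heps HKeps HlnK Hstar Hrob.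
  assert (HK0 : 0 < K) by lra.
  destruct (log_lr_endpoints mm mp K 0) as [Ha Hb]; [lra | lra | lra | nra |].
  rewrite Rplus_0_r, Rminus_0_r in Ha, Hb.
  destruct (R_nat_minimizer _ _ _ _ _ _ HK Hmu Ha Hb Hstar) as [Hs_root Hs_pos].
  destruct (log_lr_endpoints mm mp K eps) as [Ra Rb]; [lra | lra | lra | lra |].
  apply (is_min_on_ext _ (R_nat (mm + eps) (mp - eps) K)) in Hrob;
    [|intros; now apply R_rob_eq_R_nat].
  destruct (R_nat_minimizer _ _ _ _ _ _ HK Hmu Ra Rb Hrob) as [_ Hr_pos].
  assert (Hfs : (K * mm + mp) / (1 + K) < theta_star).
  { assert (Hf := log_lr_fair mm mp K HK0).
    assert (0 < ln K) by (rewrite <- ln_1; apply ln_increasing; lra).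
    destruct (Rtotal_order ((K * mm + mp) / (1 + K)) theta_star) as [h|[h|h]];
      [exact h | rewrite h in Hf; lra | specialize (Hs_pos _ h); lra]. }
  split; [exact Hfs|].
  apply Rnot_lt_le; intros h; specialize (Hr_pos _ h).
  assert (log_lr (mm + eps) (mp - eps) K theta_star <= log_lr mm mp K theta_star)
    by (apply log_lr_shift_le; lra).
  lra.
Qed.

Theorem theorem6p4 (mu_m mu_p K eps theta_star theta_f theta_r : R) :
  mu_m < mu_p ->
  1 < K ->
  0 <= eps <= (mu_p - mu_m) / 2 ->
  K <= exp ((mu_p - mu_m - 2 * eps) ^ 2 / 2) ->
  (eps = 0 \/ K <= (mu_p - mu_m) / eps - 1) ->
  is_min_on (R_nat mu_m mu_p K) mu_m mu_p theta_star ->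
  (mu_m <= theta_f <= mu_p /\ e_pos mu_p K theta_f = e_neg mu_m theta_f) ->
  is_min_on (R_rob mu_m mu_p K eps) mu_m mu_p theta_r ->
  (avg_dist mu_m mu_p K theta_r >= avg_dist mu_m mu_p K theta_star /\
   avg_dist mu_m mu_p K theta_star >= avg_dist mu_m mu_p K theta_f) /\
  (forall t, mu_m <= t <= mu_p ->
     avg_dist mu_m mu_p K theta_f <= avg_dist mu_m mu_p K t /\
     (avg_dist mu_m mu_p K t <= avg_dist mu_m mu_p K theta_f -> t = theta_f)).
Proof.
  intros Hmu HK [Heps _] HKexp Hsmall Hstar [_ Hfair] Hrob.
  assert (HK0 : 0 < K) by lra.
  apply fair_threshold_eq in Hfair; [|exact HK0].
  destruct (threshold_order mu_m mu_p K eps theta_star theta_r) as [Hfs Hsr]; auto.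
  { apply robust_radius_bound; lra. }
  { rewrite <- ln_exp; now apply ln_le. }
  rewrite <- Hfair in Hfs.
  set (A := avg_dist mu_m mu_p K); set (S := avg_dist_slope mu_m mu_p K).
  assert (Hsub : forall t r, A t - A r >= (t - r) * S r)
    by (intros; now apply avg_dist_subgradient).
  assert (Hincr : forall r1 r2, r1 < r2 -> S r1 < S r2)
    by (intros; now apply avg_dist_slope_increasing).
  assert (Hroot : S theta_f = 0) by (rewrite Hfair; now apply avg_dist_slope_fair).
  split; [split|]; [apply Rle_ge .. | intros t _; split].
  - now apply (subgradient_le A S theta_f).
  - now apply (subgradient_min A S theta_f).
  - now apply (subgradient_min A S theta_f).
  - now apply (subgradient_min_unique A S theta_f).
Qed.
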